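(* If $\Gamma$ is a locally-finite undirected simple geodetic graph in which every isometrically embedded circuit has length at most five, then every embedded circuit in $\Gamma$ has diameter at most two.
   Context: A graph is geodetic if between any pair of vertices there is a unique shortest path (geodesic); in particular it is connected, with path metric $d$. A path $u_0,u_1,\dots,u_n$ is an embedded circuit (of length $n$) if $u_0,\dots,u_{n-1}$ are distinct and $u_0=u_n$ (for adjacent $u,v$, the path $u,v,u$ is an embedded circuit of length two). An embedded circuit is isometrically embedded if $d(u_i,u_j)=\min\{j-i,n+i-j\}$ for all $0\le i<j<n$. The diameter of an embedded circuit is the maximum of $d(u_i,u_j)$ over its vertices, with $d$ the distance in $\Gamma$. *)

From Stdlib Require Import Arith List.

Section Graphs.
Variable V : Type.
Variable adj : V -> V -> Prop.

Definition simple_graph : Prop :=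
  (forall u v, adj u v -> adj v u) /\ (forall u, ~ adj u u).

Definition locally_finite : Prop :=
  forall v, exists l : list V, forall w, adj v w -> In w l.

Definition walk (p : nat -> V) (k : nat) (u v : V) : Prop :=
  p 0 = u /\ p k = v /\ forall i, i < k -> adj (p i) (p (S i)).

Definition dist (u v : V) (k : nat) : Prop :=
  (exists p, walk p k u v) /\ (forall p m, walk p m u v -> k <= m).

Definition connected : Prop := forall u v, exists k, dist u v k.

Definition geodetic : Prop :=
  connected /\
  forall u v k p q, dist u v k -> walk p k u v -> walk q k u v ->
    forall i, i <= k -> p i = q i.

Definition embedded_circuit (u : nat -> V) (n : nat) : Prop :=
  (forall i, i < n -> adj (u i) (u (S i))) /\ u n = u 0 /\
  (forall i j, i < n -> j < n -> u i = u j -> i = j).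

Definition isometric_circuit (u : nat -> V) (n : nat) : Prop :=
  embedded_circuit u n /\
  forall i j, i < j -> j < n -> dist (u i) (u j) (Nat.min (j - i) (n + i - j)).

Definition circuit_diam_le (u : nat -> V) (n : nat) (D : nat) : Prop :=
  forall i j k, i <= n -> j <= n -> dist (u i) (u j) k -> k <= D.

End Graphs.

From Stdlib Require Import Arith List ZArith Lia Classical ClassicalEpsilon Sorted.
Import ListNotations.

(** Induction on the length of the circuit C.  A chord of C, or more generally a bridge
    shorter than both arcs of C it spans, cuts C into two shorter circuits, so by induction
    both arcs have diameter at most 2.  Suppose C had two vertices at distance at least 3.
    Walking along C gives a pair at distance exactly 3, and uniqueness of geodesics forces such
    a pair to sit at offset 3 along C (the delicate configuration, a chord joining neighbours
    of the pair, can only live on an octagon, where it is ruled out by hand); it then follows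
    that every pair at offset 3 is at distance 3.  So C has length at least 6 and is not
    isometric, and a geodesic realising a shortcut leaves C along a bridge shorter than both
    arcs it spans; one of these arcs contains a pair at offset 3, a contradiction. *)

Lemma least_witness (P : nat -> Prop) m :
  P m -> exists b, b <= m /\ P b /\ forall c, c < b -> ~ P c.
Proof.
  intros Pm.
  destruct (dec_inh_nat_subset_has_unique_least_element P (fun k => classic (P k))
              (ex_intro _ m Pm)) as [b [[Pb Hb] _]].
  exists b. split; [exact (Hb m Pm)|split; [exact Pb|]].
  intros c Hc Pc. specialize (Hb c Pc). lia.
Qed.

Lemma offset_decomp (n s b : Z) : (0 < n)%Z -> exists j q, (0 <= j < n)%Z /\ b = (s + j + q * n)%Z.
Proof.
  intros Hn. exists ((b - s) mod n)%Z, ((b - s) / n)%Z. split.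
  - now apply Z.mod_pos_bound.
  - pose proof (Z.div_mod (b - s) n ltac:(lia)). lia.
Qed.

Lemma nat_discrete_ivt (f : nat -> nat) m c :
  f 0 <= c -> (forall t, f (S t) <= S (f t)) -> c <= f m -> exists t, f t = c.
Proof.
  intros H0 Hstep. induction m as [|m IHm]; intros Hm.
  - exists 0. lia.
  - destruct (le_lt_dec c (f m)) as [Hc|Hc]; [now apply IHm|].
    exists (S m). specialize (Hstep m). lia.
Qed.

Section Geodetic.
Variable V : Type.
Variable adj : V -> V -> Prop.
Hypothesis Hsimple : simple_graph V adj.
Hypothesis Hgeodetic : geodetic V adj.

Lemma adj_sym u v : adj u v -> adj v u.
Proof. apply Hsimple. Qed.

Lemma adj_irrefl u : ~ adj u u.
Proof. apply Hsimple. Qed.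

Lemma walk_rev p k u v : walk V adj p k u v -> walk V adj (fun t => p (k - t)) k v u.
Proof.
  intros [H0 [Hk Hstep]]. split; [|split].
  - rewrite Nat.sub_0_r; exact Hk.
  - rewrite Nat.sub_diag; exact H0.
  - intros i Hi. apply adj_sym. replace (k - i) with (S (k - S i)) by lia. apply Hstep. lia.
Qed.

Lemma walk_app p q k1 k2 u v w : walk V adj p k1 u v -> walk V adj q k2 v w ->
  walk V adj (fun t => if t <=? k1 then p t else q (t - k1)) (k1 + k2) u w.
Proof.
  intros [Hp0 [Hp1 Hp]] [Hq0 [Hq1 Hq]]. split; [|split].
  - exact Hp0.
  - destruct (Nat.leb_spec (k1 + k2) k1).
    + replace k2 with 0 in * by lia. rewrite Nat.add_0_r. congruence.
    + replace (k1 + k2 - k1) with k2 by lia. exact Hq1.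
  - intros i Hi. destruct (Nat.leb_spec i k1), (Nat.leb_spec (S i) k1); try lia.
    + apply Hp. lia.
    + replace i with k1 by lia. replace (S k1 - k1) with 1 by lia.
      rewrite Hp1, <- Hq0. apply Hq. lia.
    + replace (S i - k1) with (S (i - k1)) by lia. apply Hq. lia.
Qed.

Lemma walk_slice p k u v a b : walk V adj p k u v -> a <= b -> b <= k ->
  walk V adj (fun t => p (a + t)) (b - a) (p a) (p b).
Proof.
  intros [_ [_ Hstep]] Hab Hbk. split; [|split].
  - now rewrite Nat.add_0_r.
  - f_equal; lia.
  - intros i Hi. replace (a + S i) with (S (a + i)) by lia. apply Hstep. lia.
Qed.

Lemma last_cons_default (x y d : V) l : last (x :: l) d = last (x :: l) y.
Proof. revert x; induction l as [|z l IHl]; intros x; [reflexivity|apply IHl]. Qed.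

Lemma walk_of_list x l d :
  LocallySorted adj (x :: l) ->
  walk V adj (fun t => nth t (x :: l) d) (length l) x (last (x :: l) x).
Proof.
  revert x. induction l as [|y l IHl]; intros x Hl.
  - split; [|split]; [reflexivity|reflexivity|intros i Hi; simpl in Hi; lia].
  - inversion Hl as [| |? ? ? Hl' Hxy]; subst.
    destruct (IHl y Hl') as [_ [Hlast Hstep]]. split; [|split].
    + reflexivity.
    + change (nth (length l) (y :: l) d = last (y :: l) x).
      rewrite Hlast. apply last_cons_default.
    + intros [|i] Hi; [exact Hxy|]. apply Hstep. simpl in Hi. lia.
Qed.

Definition gd (u v : V) : nat :=
  proj1_sig (constructive_indefinite_description _ (proj1 Hgeodetic u v)).

Lemma gd_spec u v : dist V adj u v (gd u v).
Proof. unfold gd. destruct (constructive_indefinite_description _ _) as [k Hk]. exact Hk. Qed.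

Lemma gd_le_walk p m u v : walk V adj p m u v -> gd u v <= m.
Proof. intros Hp. exact (proj2 (gd_spec u v) p m Hp). Qed.

Lemma gd_geodesic u v : exists p, walk V adj p (gd u v) u v.
Proof. exact (proj1 (gd_spec u v)). Qed.

Lemma dist_gd u v k : dist V adj u v k -> k = gd u v.
Proof.
  intros [[p Hp] Hmin]. destruct (gd_spec u v) as [[q Hq] Hmin'].
  specialize (Hmin _ _ Hq). specialize (Hmin' _ _ Hp). lia.
Qed.

Lemma gd_refl u : gd u u = 0.
Proof.
  enough (gd u u <= 0) by lia.
  apply (gd_le_walk (fun _ => u)). split; [|split]; auto. intros; lia.
Qed.

Lemma gd_eq0 u v : gd u v = 0 -> u = v.
Proof.
  intros H. destruct (gd_geodesic u v) as [p [H0 [H1 _]]]. rewrite H in H1. congruence.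
Qed.

Lemma gd_pos u v : u <> v -> 1 <= gd u v.
Proof. intros Huv. destruct (gd u v) eqn:E; [|lia]. now apply gd_eq0 in E. Qed.

Lemma gd_eq1 u v : gd u v = 1 -> adj u v.
Proof.
  intros H. destruct (gd_geodesic u v) as [p [H0 [H1 Hstep]]]. rewrite H in H1, Hstep.
  specialize (Hstep 0 ltac:(lia)). congruence.
Qed.

Lemma gd_eq2 u v : gd u v = 2 -> exists w, adj u w /\ adj w v.
Proof.
  intros H. destruct (gd_geodesic u v) as [p [H0 [H1 Hstep]]]. rewrite H in H1, Hstep.
  exists (p 1). split.
  - rewrite <- H0. apply Hstep. lia.
  - rewrite <- H1. apply Hstep. lia.
Qed.

Lemma gd_adj u v : adj u v -> gd u v <= 1.
Proof.
  intros H. apply (gd_le_walk (fun t => match t with 0 => u | _ => v end)).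
  split; [|split]; auto. intros [|i] Hi; [exact H|lia].
Qed.

Lemma gd_sym u v : gd u v = gd v u.
Proof.
  destruct (gd_geodesic u v) as [p Hp], (gd_geodesic v u) as [q Hq].
  apply walk_rev, gd_le_walk in Hp. apply walk_rev, gd_le_walk in Hq. lia.
Qed.

Lemma gd_triangle u v w : gd u w <= gd u v + gd v w.
Proof.
  destruct (gd_geodesic u v) as [p Hp], (gd_geodesic v w) as [q Hq].
  exact (gd_le_walk _ _ _ _ (walk_app _ _ _ _ _ _ _ Hp Hq)).
Qed.

Lemma gd_le2 u v w : adj u v -> adj v w -> gd u w <= 2.
Proof.
  intros Huv Hvw. pose proof (gd_triangle u v w). pose proof (gd_adj _ _ Huv).
  pose proof (gd_adj _ _ Hvw). lia.
Qed.

Lemma gd_le_S_l u v w : adj u v -> gd u w <= S (gd v w).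
Proof. intros Huv. pose proof (gd_triangle u v w). pose proof (gd_adj _ _ Huv). lia. Qed.

Lemma gd_le_S_r u v w : adj v w -> gd u w <= S (gd u v).
Proof. intros Hvw. pose proof (gd_triangle u v w). pose proof (gd_adj _ _ Hvw). lia. Qed.

Lemma geodesic_unique p q u v : walk V adj p (gd u v) u v -> walk V adj q (gd u v) u v ->
  forall i, i <= gd u v -> p i = q i.
Proof. intros Hp Hq. exact (proj2 Hgeodetic u v _ p q (gd_spec u v) Hp Hq). Qed.

Lemma geodesic_list_unique x l l' :
  LocallySorted adj (x :: l) -> LocallySorted adj (x :: l') -> length l' = length l ->
  last (x :: l') x = last (x :: l) x -> gd x (last (x :: l) x) = length l -> l' = l.
Proof.
  intros Hl Hl' Hlen Hlast Hgd.
  pose proof (walk_of_list x l x Hl) as W. pose proof (walk_of_list x l' x Hl') as W'.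
  rewrite Hlast, Hlen, <- Hgd in W'. rewrite <- Hgd in W.
  enough (x :: l' = x :: l) by congruence.
  apply nth_ext with x x; [simpl; lia|]. intros i Hi. simpl in Hi.
  apply (geodesic_unique _ _ _ _ W' W). lia.
Qed.

Lemma geodesic_slice_gd p u v a b : walk V adj p (gd u v) u v -> a <= b -> b <= gd u v ->
  gd (p a) (p b) = b - a.
Proof.
  intros Hp Hab Hb.
  pose proof (gd_le_walk _ _ _ _ (walk_slice _ _ _ _ _ _ Hp Hab Hb)).
  pose proof (gd_le_walk _ _ _ _ (walk_slice _ _ _ _ _ _ Hp (Nat.le_0_l a) ltac:(lia))) as Hua.
  pose proof (gd_le_walk _ _ _ _ (walk_slice _ _ _ _ _ _ Hp Hb (le_n _))) as Hbv.
  destruct Hp as [Hp0 [Hpv _]]. rewrite Hp0 in Hua. rewrite Hpv in Hbv.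
  pose proof (gd_triangle u (p a) v). pose proof (gd_triangle (p a) (p b) v). lia.
Qed.

Lemma geodesic_inj p u v a b : walk V adj p (gd u v) u v -> a < b -> b <= gd u v -> p a <> p b.
Proof.
  intros Hp Hab Hb E. pose proof (geodesic_slice_gd p u v a b Hp ltac:(lia) Hb) as Hd.
  rewrite E, gd_refl in Hd. lia.
Qed.

(* An embedded circuit of length n, unrolled into an n-periodic map on Z so that rotating or
   reflecting the circuit is a reindexing. *)
Definition periodic_circuit (U : Z -> V) (n : Z) : Prop :=
  (3 <= n)%Z /\ (forall t, U (t + n)%Z = U t) /\ (forall t, adj (U t) (U (t + 1)%Z)) /\
  (forall s t, (0 <= t - s < n)%Z -> U s = U t -> s = t).

Section Periodic.
Variables (U : Z -> V) (n : Z).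
Hypothesis HU : periodic_circuit U n.

Lemma period_ge3 : (3 <= n)%Z.
Proof. apply HU. Qed.

Lemma periodic_add_mul t q : U (t + q * n)%Z = U t.
Proof.
  destruct HU as (_ & Hper & _).
  assert (Hnat : forall q, (0 <= q)%Z -> forall t, U (t + q * n)%Z = U t).
  { refine (natlike_ind _ _ _).
    - intros t'. f_equal; lia.
    - intros x _ IH t'. replace (t' + Z.succ x * n)%Z with (t' + x * n + n)%Z by lia.
      now rewrite Hper. }
  destruct (Z_le_gt_dec 0 q); [auto|].
  rewrite <- (Hnat (- q)%Z ltac:(lia) (t + q * n)%Z). f_equal; lia.
Qed.

Lemma periodic_eq_mod s t : (n | t - s)%Z -> U s = U t.
Proof. intros [q Hq]. rewrite <- (periodic_add_mul s q). f_equal; lia. Qed.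

Lemma periodic_rep s b : exists j, (0 <= j < n)%Z /\ U b = U (s + j)%Z.
Proof.
  pose proof period_ge3. destruct (offset_decomp n s b ltac:(lia)) as [j [q [Hj ->]]].
  exists j. split; [exact Hj|]. apply periodic_add_mul.
Qed.

Lemma periodic_inj s t : (0 <= t - s < n)%Z -> U s = U t -> s = t.
Proof. apply HU. Qed.

Lemma periodic_neq s t : (0 < Z.abs (t - s) < n)%Z -> U s <> U t.
Proof.
  intros Hst E. destruct (Z_le_gt_dec s t).
  - apply periodic_inj in E; lia.
  - symmetry in E. apply periodic_inj in E; lia.
Qed.

Lemma periodic_eq_shift s t k : U s = U t -> U (s + k)%Z = U (t + k)%Z.
Proof.
  pose proof period_ge3. destruct (offset_decomp n s t ltac:(lia)) as [j [q [Hj ->]]].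
  rewrite periodic_add_mul. intros E. apply periodic_inj in E; [|lia].
  replace (s + j + q * n + k)%Z with (s + k + q * n)%Z by lia. now rewrite periodic_add_mul.
Qed.

Lemma periodic_adj_succ s t : (n | t - s - 1)%Z -> adj (U s) (U t).
Proof.
  intros [q Hq]. rewrite <- (periodic_eq_mod (s + 1) t) by (exists q; lia). apply HU.
Qed.

Lemma periodic_adj_pred s t : (n | t - s + 1)%Z -> adj (U s) (U t).
Proof. intros [q Hq]. apply adj_sym, periodic_adj_succ. exists (- q)%Z. lia. Qed.

Lemma walk_arc s k : (0 <= k)%Z ->
  walk V adj (fun i => U (s + Z.of_nat i)%Z) (Z.to_nat k) (U s) (U (s + k)%Z).
Proof.
  intros Hk. split; [|split]; [f_equal; lia|f_equal; lia|].
  intros i _. apply periodic_adj_succ. exists 0%Z. lia.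
Qed.

Lemma walk_arc_rev s k : (0 <= k)%Z ->
  walk V adj (fun i => U (s - Z.of_nat i)%Z) (Z.to_nat k) (U s) (U (s - k)%Z).
Proof.
  intros Hk. split; [|split]; [f_equal; lia|f_equal; lia|].
  intros i _. apply periodic_adj_pred. exists 0%Z. lia.
Qed.

Lemma gd_arc_le s k : (0 <= k)%Z -> gd (U s) (U (s + k)%Z) <= Z.to_nat k.
Proof. intros Hk. exact (gd_le_walk _ _ _ _ (walk_arc s k Hk)). Qed.

End Periodic.

Lemma periodic_rot U n c : periodic_circuit U n -> periodic_circuit (fun t => U (c + t)%Z) n.
Proof.
  intros HU. split; [|split; [|split]].
  - exact (period_ge3 U n HU).
  - intros t. apply (periodic_eq_mod U n HU). exists (-1)%Z. lia.
  - intros t. apply (periodic_adj_succ U n HU). exists 0%Z. lia.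
  - intros s t Hst E. apply (periodic_inj U n HU) in E; lia.
Qed.

Lemma periodic_refl U n c : periodic_circuit U n -> periodic_circuit (fun t => U (c - t)%Z) n.
Proof.
  intros HU. split; [|split; [|split]].
  - exact (period_ge3 U n HU).
  - intros t. apply (periodic_eq_mod U n HU). exists 1%Z. lia.
  - intros t. apply (periodic_adj_pred U n HU). exists 0%Z. lia.
  - intros s t Hst E. symmetry in E. apply (periodic_inj U n HU) in E; lia.
Qed.

Ltac divides := first [ exists 0%Z; lia | exists 1%Z; lia | exists (-1)%Z; lia
                      | exists 2%Z; lia | exists (-2)%Z; lia ].
Ltac circ_eq HU := apply (periodic_eq_mod _ _ HU); divides.
Ltac circ_adj HU := first [ apply (periodic_adj_succ _ _ HU); divides
                          | apply (periodic_adj_pred _ _ HU); divides ].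
Ltac circ_neq HU E := exfalso; refine (periodic_neq _ _ HU _ _ _ E); lia.

Definition arc_diam_le2 (U : Z -> V) (s a : Z) : Prop :=
  forall j1 j2, (0 <= j1 <= a)%Z -> (0 <= j2 <= a)%Z -> gd (U (s + j1)%Z) (U (s + j2)%Z) <= 2.

Definition bridge (U : Z -> V) (p : nat -> V) (l : nat) : Prop :=
  1 <= l /\ (forall t1 t2, 0 < t1 < l -> 0 < t2 < l -> p t1 = p t2 -> t1 = t2) /\
  (forall t x, 0 < t < l -> p t <> U x).

Lemma bridge_rev U p l : bridge U p l -> bridge U (fun t => p (l - t)) l.
Proof.
  intros [Hl [Hinj Hoff]]. split; [exact Hl|split].
  - intros t1 t2 Ht1 Ht2 E. apply Hinj in E; lia.
  - intros t x Ht. apply Hoff. lia.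
Qed.

Lemma excursion_single_step (U : Z -> V) R u v a b q x y z :
  walk V adj R (gd u v) u v -> a < b -> b <= gd u v -> R a = x -> R b = y ->
  (forall c w, a < c < b -> R c <> U w) ->
  walk V adj q (b - a) x y -> q 1 = U z -> b = S a.
Proof.
  intros HR Hab Hb Ha Hbe Hoff Hq Hq1.
  pose proof (walk_slice _ _ _ _ _ _ HR (Nat.lt_le_incl _ _ Hab) Hb) as Hs.
  rewrite Ha, Hbe in Hs.
  assert (Hd : gd x y = b - a).
  { rewrite <- Ha, <- Hbe. apply (geodesic_slice_gd R u v a b HR); lia. }
  rewrite <- Hd in Hs, Hq.
  pose proof (geodesic_unique _ _ _ _ Hs Hq 1 ltac:(lia)) as E. cbv beta in E.
  destruct (Nat.eq_dec b (S a)) as [|Hne]; [assumption|].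
  exfalso. apply (Hoff (a + 1) z); [lia|]. now rewrite E.
Qed.

Section ShorterCircuits.
Variable n : Z.
Hypothesis IH : forall m (w : nat -> V), (Z.of_nat m < n)%Z ->
  embedded_circuit V adj w m -> circuit_diam_le V adj w m 2.

Lemma bridge_arc_diam_le2 U i a p l : periodic_circuit U n -> (1 <= a)%Z ->
  walk V adj p l (U (i + a)%Z) (U i) -> bridge U p l -> (a + Z.of_nat l < n)%Z ->
  arc_diam_le2 U i a.
Proof.
  intros HU Ha [Hp0 [Hpl Hstep]] [Hl [Hinj Hoff]] Hlen j1 j2 Hj1 Hj2.
  set (A := Z.to_nat a).
  set (w := fun t : nat => if t <=? A then U (i + Z.of_nat t)%Z else p (t - A)).
  assert (Hw : embedded_circuit V adj w (A + l)).
  { split; [|split].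
    - intros t Ht. unfold w.
      destruct (Nat.leb_spec t A), (Nat.leb_spec (S t) A); try lia.
      + circ_adj HU.
      + replace t with A by lia. replace (S A - A) with 1 by lia.
        replace (i + Z.of_nat A)%Z with (i + a)%Z by lia. rewrite <- Hp0. apply Hstep. lia.
      + replace (S t - A) with (S (t - A)) by lia. apply Hstep. lia.
    - unfold w. destruct (Nat.leb_spec (A + l) A), (Nat.leb_spec 0 A); try lia.
      replace (A + l - A) with l by lia. rewrite Hpl. f_equal; lia.
    - intros t1 t2 Ht1 Ht2 E. unfold w in E.
      destruct (Nat.leb_spec t1 A), (Nat.leb_spec t2 A).
      + destruct (Nat.eq_dec t1 t2); [assumption|]. circ_neq HU E.
      + exfalso. symmetry in E. exact (Hoff (t2 - A) _ ltac:(lia) E).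
      + exfalso. exact (Hoff (t1 - A) _ ltac:(lia) E).
      + apply Hinj in E; lia. }
  assert (Hj : forall j, (0 <= j <= a)%Z -> w (Z.to_nat j) = U (i + j)%Z).
  { intros j Hj. unfold w. destruct (Nat.leb_spec (Z.to_nat j) A); [|lia]. f_equal; lia. }
  rewrite <- (Hj j1 Hj1), <- (Hj j2 Hj2).
  exact (IH (A + l) w ltac:(lia) Hw (Z.to_nat j1) (Z.to_nat j2) _ ltac:(lia) ltac:(lia)
            (gd_spec _ _)).
Qed.

Definition split_by (U : Z -> V) (s a : Z) : Prop :=
  arc_diam_le2 U s a /\ arc_diam_le2 U (s + a) (n - a).

Lemma bridge_split U s a p l : periodic_circuit U n ->
  walk V adj p l (U (s + a)%Z) (U s) -> bridge U p l ->
  (Z.of_nat l < a)%Z -> (Z.of_nat l < n - a)%Z -> split_by U s a.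
Proof.
  intros HU Hp Hb Hla Hlb. pose proof Hb as [Hl _]. split.
  - apply (bridge_arc_diam_le2 U s a p l); auto; lia.
  - apply (bridge_arc_diam_le2 U (s + a) (n - a) (fun t => p (l - t)) l); auto; try lia.
    + replace (U (s + a + (n - a))%Z) with (U s) by circ_eq HU. now apply walk_rev.
    + now apply bridge_rev.
Qed.

Lemma chord_split U s t : periodic_circuit U n -> adj (U s) (U t) ->
  (2 <= t - s <= n - 2)%Z -> split_by U s (t - s).
Proof.
  intros HU Hadj Hst.
  apply (bridge_split U s (t - s) (fun i => match i with 0 => U t | _ => U s end) 1 HU);
    [|split; [lia|split; intros; lia]|lia|lia].
  split; [|split]; [f_equal; lia|reflexivity|].
  intros [|i] Hi; [now apply adj_sym|lia].
Qed.

Lemma split_gd_le2 U s a x y j1 j2 : split_by U s a ->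
  x = U (s + j1)%Z -> y = U (s + j2)%Z ->
  ((0 <= j1 <= a /\ 0 <= j2 <= a) \/ (a <= j1 <= n /\ a <= j2 <= n))%Z -> gd x y <= 2.
Proof.
  intros [H1 H2] -> -> [[Hj1 Hj2]|[Hj1 Hj2]].
  - now apply H1.
  - replace (s + j1)%Z with (s + a + (j1 - a))%Z by lia.
    replace (s + j2)%Z with (s + a + (j2 - a))%Z by lia. apply H2; lia.
Qed.

(* An excursion as long as one of the arcs it spans is that arc, by uniqueness of geodesics;
   otherwise it is a bridge shorter than both arcs. *)
Lemma geodesic_excursion U u v R a b e1 e2 : periodic_circuit U n ->
  walk V adj R (gd u v) u v -> a < b -> b <= gd u v -> R a = U e1 -> R b = U e2 ->
  (forall c x, a < c < b -> R c <> U x) ->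
  (b = S a /\ (U e2 = U (e1 + 1)%Z \/ U e2 = U (e1 - 1)%Z)) \/
  (exists j, (2 <= j <= n - 2)%Z /\ split_by U e1 j).
Proof.
  intros HU HR Hab Hb Ha Hbe Hoff.
  assert (Hd : gd (U e1) (U e2) = b - a).
  { rewrite <- Ha, <- Hbe. apply (geodesic_slice_gd R u v a b HR); lia. }
  destruct (periodic_rep U n HU e1 e2) as [j [Hj Ej]].
  assert (Hj0 : j <> 0%Z).
  { intros ->. rewrite Ej, Z.add_0_r, gd_refl in Hd. lia. }
  pose proof (gd_arc_le U n HU e1 j ltac:(lia)) as Hfwd. rewrite <- Ej, Hd in Hfwd.
  pose proof (walk_arc_rev U n HU e1 (n - j) ltac:(lia)) as Wbwd.
  replace (U (e1 - (n - j))%Z) with (U e2) in Wbwd by (rewrite Ej; circ_eq HU).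
  pose proof (gd_le_walk _ _ _ _ Wbwd) as Hbwd. rewrite Hd in Hbwd.
  destruct (Z.eq_dec (Z.of_nat (b - a)) (n - j)) as [Eb|Eb];
    [|destruct (Z.eq_dec (Z.of_nat (b - a)) j) as [Ef|Ef]].
  - left. replace (Z.to_nat (n - j)) with (b - a) in Wbwd by lia.
    pose proof (excursion_single_step U R u v a b _ _ _ _ HR Hab Hb Ha Hbe Hoff Wbwd eq_refl).
    split; [assumption|]. right. rewrite Ej. circ_eq HU.
  - left. pose proof (walk_arc U n HU e1 j ltac:(lia)) as Wfwd. rewrite <- Ej in Wfwd.
    replace (Z.to_nat j) with (b - a) in Wfwd by lia.
    pose proof (excursion_single_step U R u v a b _ _ _ _ HR Hab Hb Ha Hbe Hoff Wfwd eq_refl).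
    split; [assumption|]. left. rewrite Ej. f_equal. lia.
  - right. exists j. split; [lia|].
    apply (bridge_split U e1 j (fun t => R (a + (b - a - t))) (b - a) HU); [| |lia|lia].
    + pose proof (walk_rev _ _ _ _ (walk_slice _ _ _ _ _ _ HR (Nat.lt_le_incl _ _ Hab) Hb)) as W.
      rewrite Hbe, Ha, Ej in W. exact W.
    + split; [lia|split].
      * intros t1 t2 Ht1 Ht2 E.
        destruct (Nat.lt_total t1 t2) as [Hlt|[Heq|Hlt]]; [symmetry in E| |];
          [|assumption|]; exfalso; (eapply (geodesic_inj R u v); [exact HR| | |exact E]); lia.
      * intros t x Ht. apply Hoff. lia.
Qed.

Lemma split_endpoint_gd_le2 U s j b : periodic_circuit U n -> (0 <= j <= n)%Z ->
  split_by U s j -> gd (U s) (U b) <= 2.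
Proof.
  intros HU Hj Hs. destruct (periodic_rep U n HU s b) as [k [Hk Ek]].
  destruct (Z_le_gt_dec k j).
  - apply (split_gd_le2 U s j _ _ 0 k Hs); [f_equal; lia|exact Ek|lia].
  - apply (split_gd_le2 U s j _ _ n k Hs); [circ_eq HU|exact Ek|lia].
Qed.

Lemma geodesic_first_step U a b R : periodic_circuit U n -> U a <> U b ->
  walk V adj R (gd (U a) (U b)) (U a) (U b) ->
  (R 1 = U (a + 1)%Z \/ R 1 = U (a - 1)%Z) \/ (exists j, (2 <= j <= n - 2)%Z /\ split_by U a j).
Proof.
  intros HU Hab HR. pose proof (gd_pos _ _ Hab) as Hd.
  destruct (least_witness (fun g => 1 <= g /\ exists s, R g = U s) (gd (U a) (U b)))
    as [g [Hgd [[Hg [e Ee]] Hfirst]]].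
  { split; [exact Hd|]. exists b. apply HR. }
  assert (Hoff : forall c x, 0 < c < g -> R c <> U x).
  { intros c x Hc E. apply (Hfirst c); [lia|]. split; [lia|]. eauto. }
  destruct (geodesic_excursion U _ _ R 0 g a e HU HR ltac:(lia) Hgd (proj1 HR) Ee Hoff)
    as [[-> [E|E]]|[j [Hj Hs]]].
  - left. left. congruence.
  - left. right. congruence.
  - right. eauto.
Qed.

Lemma geodesic3_first_step U a b Q : periodic_circuit U n -> gd (U a) (U b) = 3 ->
  walk V adj Q 3 (U a) (U b) -> Q 1 = U (a + 1)%Z \/ Q 1 = U (a - 1)%Z.
Proof.
  intros HU Hd HQ. rewrite <- Hd in HQ.
  assert (Hab : U a <> U b) by (intros E; rewrite E, gd_refl in Hd; discriminate).
  destruct (geodesic_first_step U a b Q HU Hab HQ) as [|[j [Hj Hs]]]; [assumption|].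
  pose proof (split_endpoint_gd_le2 U a j b HU ltac:(lia) Hs). lia.
Qed.

Lemma geodesic3_last_step U a b Q : periodic_circuit U n -> gd (U a) (U b) = 3 ->
  walk V adj Q 3 (U a) (U b) -> Q 2 = U (b + 1)%Z \/ Q 2 = U (b - 1)%Z.
Proof.
  intros HU Hd HQ. rewrite gd_sym in Hd.
  exact (geodesic3_first_step U b a _ HU Hd (walk_rev _ _ _ _ HQ)).
Qed.

Ltac chain HU := repeat constructor; first [ assumption | apply adj_sym; assumption | circ_adj HU ].

Lemma chord_config_facts U a : periodic_circuit U n -> adj (U 0%Z) (U a) ->
  (2 <= a <= n - 2)%Z -> gd (U 1%Z) (U (a + 1)%Z) = 3 ->
  (3 <= a)%Z /\ gd (U 2%Z) (U (a + 1)%Z) = 3 /\ gd (U 1%Z) (U (a + 2)%Z) = 3.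
Proof.
  intros HU H0a Ha Hd.
  pose proof (chord_split U 0 a HU H0a ltac:(lia)) as Hs.
  split; [|split].
  - destruct (Z.eq_dec a 2) as [->|]; [|lia].
    assert (gd (U 1%Z) (U (2 + 1)%Z) <= 2) by (apply (gd_le2 _ (U 2%Z)); circ_adj HU). lia.
  - assert (gd (U 2%Z) (U a) <= 2)
      by (apply (split_gd_le2 U 0 _ _ _ 2 a Hs); [f_equal; lia|f_equal; lia|lia]).
    pose proof (gd_le_S_r (U 2%Z) (U a) (U (a + 1)%Z) ltac:(circ_adj HU)).
    pose proof (gd_le_S_l (U 1%Z) (U 2%Z) (U (a + 1)%Z) ltac:(circ_adj HU)).
    assert (gd (U 2%Z) (U (a + 1)%Z) <> 2); [|lia].
    intros E. apply gd_eq2 in E as [w [H2w Hw]].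
    pose proof (geodesic_list_unique (U 1%Z) [U 0%Z; U a; U (a + 1)%Z] [U 2%Z; w; U (a + 1)%Z]
                  ltac:(chain HU) ltac:(chain HU) eq_refl eq_refl Hd) as E.
    injection E as E _. circ_neq HU E.
  - assert (gd (U 0%Z) (U (a + 2)%Z) <= 2)
      by (apply (split_gd_le2 U 0 _ _ _ n (a + 2) Hs); [circ_eq HU|f_equal; lia|lia]).
    pose proof (gd_le_S_l (U 1%Z) (U 0%Z) (U (a + 2)%Z) ltac:(circ_adj HU)).
    pose proof (gd_le_S_r (U 1%Z) (U (a + 2)%Z) (U (a + 1)%Z) ltac:(circ_adj HU)).
    assert (gd (U 1%Z) (U (a + 2)%Z) <> 2); [|lia].
    intros E. apply gd_eq2 in E as [w [H1w Hw]].
    pose proof (geodesic_list_unique (U 1%Z) [U 0%Z; U a; U (a + 1)%Z] [w; U (a + 2)%Z; U (a + 1)%Z]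
                  ltac:(chain HU) ltac:(chain HU) eq_refl eq_refl Hd) as E.
    injection E as _ E. circ_neq HU E.
Qed.

Lemma chord_config_offset4 U a : periodic_circuit U n -> adj (U 0%Z) (U a) ->
  (2 <= a <= n - 2)%Z -> gd (U 1%Z) (U (a + 1)%Z) = 3 -> a = 4%Z.
Proof.
  intros HU H0a Ha Hd.
  destruct (chord_config_facts U a HU H0a Ha Hd) as [Ha3 [Hd2 Hd1]].
  destruct (gd_geodesic (U 2%Z) (U (a + 1)%Z)) as [Q HQ]. rewrite Hd2 in HQ.
  pose proof HQ as [_ [HQ3 HQstep]].
  assert (Q12 := HQstep 1 ltac:(lia)). assert (Q23 := HQstep 2 ltac:(lia)). rewrite HQ3 in Q23.
  destruct (geodesic3_first_step U 2 (a + 1) Q HU Hd2 HQ) as [E1|E1]; rewrite E1 in Q12;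
    [|pose proof (gd_le2 _ _ _ Q12 Q23); replace (2 - 1)%Z with 1%Z in *; lia].
  destruct (geodesic3_last_step U 2 (a + 1) Q HU Hd2 HQ) as [E2|E2]; rewrite E2 in Q12.
  - exfalso. pose proof (chord_split U _ _ HU Q12 ltac:(lia)) as Hs.
    assert (gd (U 1%Z) (U (a + 2)%Z) <= 2)
      by (apply (split_gd_le2 U _ _ _ _ (n - 2) (a - 1) Hs); [circ_eq HU|f_equal; lia|lia]).
    lia.
  - destruct (Z.eq_dec a 4) as [|Ha4]; [assumption|exfalso].
    destruct (Z.eq_dec a 3) as [->|Ha3'].
    { revert Q12. apply adj_irrefl. }
    pose proof (chord_split U _ _ HU Q12 ltac:(lia)) as Hs.
    assert (gd (U 2%Z) (U (a + 1)%Z) <= 2)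
      by (apply (split_gd_le2 U _ _ _ _ (n - 1) (a - 2) Hs); [circ_eq HU|f_equal; lia|lia]).
    lia.
Qed.

Lemma octagon_chords_impossible U : periodic_circuit U n -> n = 8%Z ->
  adj (U 0%Z) (U 4%Z) -> adj (U 3%Z) (U 7%Z) -> gd (U 1%Z) (U 5%Z) = 3 -> False.
Proof.
  intros HU Hn A04 A37 Hd.
  pose proof (chord_split U 0 4 HU A04 ltac:(lia)) as Hs.
  assert (gd (U 0%Z) (U 3%Z) <= 2)
    by (apply (split_gd_le2 U _ _ _ _ 0 3 Hs); [f_equal; lia|f_equal; lia|lia]).
  assert (1 <= gd (U 0%Z) (U 3%Z)) by (apply gd_pos; intros E; circ_neq HU E).
  destruct (gd (U 0%Z) (U 3%Z)) as [|[|[|]]] eqn:E03; try lia.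
  - apply gd_eq1 in E03.
    assert (gd (U 1%Z) (U 3%Z) <= 2) by (apply (gd_le2 _ (U 2%Z)); circ_adj HU).
    assert (1 <= gd (U 1%Z) (U 3%Z)) by (apply gd_pos; intros E; circ_neq HU E).
    destruct (gd (U 1%Z) (U 3%Z)) as [|[|[|]]] eqn:E13; try lia.
    + apply gd_eq1 in E13. pose proof (chord_split U 1 3 HU E13 ltac:(lia)) as Hs13.
      assert (gd (U 1%Z) (U 5%Z) <= 2)
        by (apply (split_gd_le2 U _ _ _ _ n 4 Hs13); [circ_eq HU|f_equal; lia|lia]).
      lia.
    + pose proof (geodesic_list_unique (U 1%Z) [U 2%Z; U 3%Z] [U 0%Z; U 3%Z]
                    ltac:(chain HU) ltac:(chain HU) eq_refl eq_refl E13) as E.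
      injection E as E. circ_neq HU E.
  - pose proof (geodesic_list_unique (U 0%Z) [U 4%Z; U 3%Z] [U 7%Z; U 3%Z]
                  ltac:(chain HU) ltac:(chain HU) eq_refl eq_refl E03) as E.
    injection E as E. circ_neq HU E.
Qed.

Lemma octagon_config_impossible U : periodic_circuit U n -> n = 8%Z -> adj (U 0%Z) (U 4%Z) ->
  gd (U 1%Z) (U 5%Z) = 3 -> gd (U 2%Z) (U 5%Z) = 3 -> gd (U 1%Z) (U 6%Z) = 3 -> False.
Proof.
  intros HU Hn A04 Hd15 Hd25 Hd16.
  pose proof (gd_le_S_r (U 2%Z) (U 6%Z) (U 5%Z) ltac:(circ_adj HU)) as Hlo.
  pose proof (gd_arc_le U n HU 2 4 ltac:(lia)) as Hhi. simpl in Hhi.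
  destruct (gd (U 2%Z) (U 6%Z)) as [|[|[|[|[|]]]]] eqn:E26; try lia.
  - apply gd_eq2 in E26 as [h [H2h Hh6]].
    pose proof (geodesic_list_unique (U 2%Z) [U 3%Z; U 4%Z; U 5%Z] [h; U 6%Z; U 5%Z]
                  ltac:(chain HU) ltac:(chain HU) eq_refl eq_refl Hd25) as E.
    injection E as _ E. circ_neq HU E.
  - destruct (gd_geodesic (U 2%Z) (U 6%Z)) as [Q HQ]. rewrite E26 in HQ.
    pose proof HQ as [_ [_ HQstep]]. assert (Q12 := HQstep 1 ltac:(lia)).
    destruct (geodesic3_first_step U 2 6 Q HU E26 HQ) as [E1|E1]; rewrite E1 in Q12;
      destruct (geodesic3_last_step U 2 6 Q HU E26 HQ) as [E2|E2]; rewrite E2 in Q12;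
      simpl in Q12.
    + exact (octagon_chords_impossible U HU Hn A04 Q12 Hd15).
    + assert (gd (U 2%Z) (U 5%Z) <= 2) by (apply (gd_le2 _ (U 3%Z)); [circ_adj HU|exact Q12]). lia.
    + assert (gd (U 1%Z) (U 6%Z) <= 2) by (apply (gd_le2 _ (U 7%Z)); [exact Q12|circ_adj HU]). lia.
    + pose proof (gd_adj _ _ Q12). lia.
  - pose proof (geodesic_list_unique (U 2%Z) [U 3%Z; U 4%Z; U 5%Z; U 6%Z]
                  [U 1%Z; U 0%Z; U 7%Z; U 6%Z]
                  ltac:(chain HU) ltac:(chain HU) eq_refl eq_refl E26) as E.
    injection E as E _ _. circ_neq HU E.
Qed.

(* Applied at both ends of the chord, chord_config_offset4 leaves only the octagon. *)
Lemma chord_config_impossible U a : periodic_circuit U n -> adj (U 0%Z) (U a) ->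
  (2 <= a <= n - 2)%Z -> gd (U 1%Z) (U (a + 1)%Z) = 3 -> False.
Proof.
  intros HU H0a Ha Hd.
  pose proof (chord_config_offset4 U a HU H0a Ha Hd) as Ha4.
  assert (Hna : (n - a = 4)%Z).
  { apply (chord_config_offset4 (fun t => U (a + t)%Z) (n - a) (periodic_rot U n a HU)); [|lia|].
    - replace (U (a + (n - a))%Z) with (U 0%Z) by circ_eq HU.
      rewrite Z.add_0_r. now apply adj_sym.
    - rewrite gd_sym. replace (U (a + (n - a + 1))%Z) with (U 1%Z) by circ_eq HU.
      exact Hd. }
  destruct (chord_config_facts U a HU H0a Ha Hd) as [_ [Hd2 Hd1]]. subst a.
  exact (octagon_config_impossible U HU ltac:(lia) H0a Hd Hd2 Hd1).
Qed.

Lemma chord_neighbours_gd_ne3 U s j f1 f2 : periodic_circuit U n ->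
  adj (U s) (U (s + j)%Z) -> (2 <= j <= n - 2)%Z ->
  (f1 = 1 \/ f1 = -1)%Z -> (f2 = 1 \/ f2 = -1)%Z -> gd (U (s + f1)%Z) (U (s + j + f2)%Z) <> 3.
Proof.
  intros HU Hadj Hj Hf1 Hf2 Hd.
  pose proof (chord_split U _ _ HU Hadj ltac:(lia)) as Hs.
  destruct Hf1 as [-> | ->], Hf2 as [-> | ->].
  - apply (chord_config_impossible (fun t => U (s + t)%Z) j (periodic_rot U n s HU)).
    + now rewrite Z.add_0_r.
    + lia.
    + rewrite <- Hd. do 2 f_equal. lia.
  - assert (gd (U (s + 1)%Z) (U (s + j + -1)%Z) <= 2)
      by (apply (split_gd_le2 U _ _ _ _ 1 (j - 1) Hs); [f_equal; lia|f_equal; lia|lia]).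
    lia.
  - assert (gd (U (s + -1)%Z) (U (s + j + 1)%Z) <= 2)
      by (apply (split_gd_le2 U _ _ _ _ (n - 1) (j + 1) Hs); [circ_eq HU|f_equal; lia|lia]).
    lia.
  - apply (chord_config_impossible (fun t => U (s + j - t)%Z) j (periodic_refl U n (s + j) HU)).
    + rewrite Z.sub_0_r. replace (s + j - j)%Z with s by lia. now apply adj_sym.
    + lia.
    + rewrite gd_sym, <- Hd. f_equal; f_equal; lia.
Qed.

Lemma geodesic3_inner_steps U a b Q : periodic_circuit U n -> gd (U a) (U b) = 3 ->
  walk V adj Q 3 (U a) (U b) -> exists f1 f2, (f1 = 1 \/ f1 = -1)%Z /\ (f2 = 1 \/ f2 = -1)%Z /\
    Q 1 = U (a + f1)%Z /\ Q 2 = U (b + f2)%Z.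
Proof.
  intros HU Hd HQ.
  destruct (geodesic3_first_step U a b Q HU Hd HQ) as [E1|E1];
    [exists 1%Z|exists (-1)%Z];
    (destruct (geodesic3_last_step U a b Q HU Hd HQ) as [E2|E2]; [exists 1%Z|exists (-1)%Z]);
    repeat split; auto.
Qed.

Lemma gd3_offset3 U a b : periodic_circuit U n -> gd (U a) (U b) = 3 ->
  U b = U (a + 3)%Z \/ U b = U (a - 3)%Z.
Proof.
  intros HU Hd.
  destruct (gd_geodesic (U a) (U b)) as [Q HQ]. rewrite Hd in HQ.
  pose proof HQ as [_ [_ HQstep]].
  destruct (geodesic3_inner_steps U a b Q HU Hd HQ) as [f1 [f2 [Hf1 [Hf2 [E1 E2]]]]].
  destruct (periodic_rep U n HU (a + f1) (b + f2)) as [j [Hj Ej]].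
  assert (Hchord : adj (U (a + f1)%Z) (U (a + f1 + j)%Z)).
  { rewrite <- Ej, <- E1, <- E2. apply HQstep. lia. }
  assert (Eb : U b = U (a + f1 + j - f2)%Z).
  { transitivity (U (b + f2 + - f2)%Z); [f_equal; lia|].
    rewrite (periodic_eq_shift U n HU _ _ (- f2) Ej). f_equal; lia. }
  destruct (Z.eq_dec j 0) as [->|Hj0].
  { exfalso. revert Hchord. rewrite Z.add_0_r. apply adj_irrefl. }
  assert (Hcases : (2 <= j <= n - 2)%Z \/
                   exists e, (e = 1 \/ e = -1)%Z /\ U b = U (a + f1 + e - f2)%Z).
  { destruct (Z.eq_dec j 1) as [->|Hj1]; [right; exists 1%Z; auto|].
    destruct (Z.eq_dec j (n - 1)) as [->|Hjn]; [|left; lia].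
    right. exists (-1)%Z. split; [now right|]. rewrite Eb. circ_eq HU. }
  destruct Hcases as [Hj2|[e [He Eb']]].
  - exfalso. apply (chord_neighbours_gd_ne3 U (a + f1) j (- f1) (- f2) HU Hchord); [lia|lia|lia|].
    rewrite <- Hd, Eb. f_equal; f_equal; lia.
  - destruct Hf1 as [-> | ->], Hf2 as [-> | ->], He as [-> | ->];
      first [ left; rewrite Eb'; f_equal; lia | right; rewrite Eb'; f_equal; lia
            | exfalso; pose proof (gd_adj (U a) (U b) ltac:(rewrite Eb'; circ_adj HU)); lia ].
Qed.

Lemma gd3_window_succ U e : periodic_circuit U n ->
  gd (U e) (U (e + 3)%Z) = 3 -> gd (U (e + 1)%Z) (U (e + 4)%Z) = 3.
Proof.
  intros HU Hd. pose proof (period_ge3 U n HU).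
  assert (Hup : gd (U (e + 1)%Z) (U (e + 4)%Z) <= 3).
  { replace (e + 4)%Z with (e + 1 + 3)%Z by lia. apply (gd_arc_le U n HU). lia. }
  pose proof (gd_le_S_r (U e) (U (e + 4)%Z) (U (e + 3)%Z) ltac:(circ_adj HU)) as Hlo.
  pose proof (gd_le_S_l (U e) (U (e + 1)%Z) (U (e + 4)%Z) ltac:(circ_adj HU)) as Hstep.
  destruct (gd (U e) (U (e + 4)%Z)) as [|[|[|[|]]]] eqn:E; try lia.
  - apply gd_eq2 in E as [w [Hew Hw]].
    pose proof (geodesic_list_unique (U e) [U (e + 1)%Z; U (e + 2)%Z; U (e + 3)%Z]
                  [w; U (e + 4)%Z; U (e + 3)%Z] ltac:(chain HU) ltac:(chain HU) eq_refl eq_refl Hd)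
      as E'.
    injection E' as _ E'. circ_neq HU E'.
  - destruct (gd3_offset3 U e (e + 4) HU E) as [E'|E']; [circ_neq HU E'|].
    assert (gd (U (e + 1)%Z) (U (e + 4)%Z) <> 2); [|lia].
    intros E2. apply gd_eq2 in E2 as [z [H1z Hz]].
    assert (adj (U (e - 2)%Z) (U (e + 4)%Z)) by (rewrite E'; circ_adj HU).
    pose proof (geodesic_list_unique (U e) [U (e - 1)%Z; U (e - 2)%Z; U (e + 4)%Z]
                  [U (e + 1)%Z; z; U (e + 4)%Z] ltac:(chain HU) ltac:(chain HU) eq_refl eq_refl E)
      as E''.
    injection E'' as E'' _. circ_neq HU E''.
Qed.

Lemma gd3_windows U e0 : periodic_circuit U n -> gd (U e0) (U (e0 + 3)%Z) = 3 ->
  forall e, gd (U e) (U (e + 3)%Z) = 3.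
Proof.
  intros HU H0 e. pose proof (period_ge3 U n HU).
  assert (Hk : forall k : nat, gd (U (e0 + Z.of_nat k)%Z) (U (e0 + Z.of_nat k + 3)%Z) = 3).
  { induction k as [|k IHk].
    - now rewrite Z.add_0_r.
    - rewrite Nat2Z.inj_succ, <- Z.add_1_r, Z.add_assoc.
      replace (e0 + Z.of_nat k + 1 + 3)%Z with (e0 + Z.of_nat k + 4)%Z by lia.
      now apply gd3_window_succ. }
  destruct (offset_decomp n e0 e ltac:(lia)) as [j [q [Hj ->]]].
  replace (e0 + j + q * n + 3)%Z with (e0 + j + 3 + q * n)%Z by lia.
  rewrite !(periodic_add_mul U n HU). specialize (Hk (Z.to_nat j)).
  now rewrite Z2Nat.id in Hk by lia.
Qed.

Lemma windows_period_ge6 U : periodic_circuit U n ->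
  (forall e, gd (U e) (U (e + 3)%Z) = 3) -> (6 <= n)%Z.
Proof.
  intros HU Hall. pose proof (period_ge3 U n HU).
  pose proof (gd_arc_le U n HU 3 (n - 3) ltac:(lia)) as Hbwd.
  replace (U (3 + (n - 3))%Z) with (U 0%Z) in Hbwd by circ_eq HU.
  pose proof (Hall 0%Z) as H03. simpl in H03. rewrite gd_sym in Hbwd. lia.
Qed.

Lemma windows_no_split U s j : periodic_circuit U n ->
  (forall e, gd (U e) (U (e + 3)%Z) = 3) -> (2 <= j <= n - 2)%Z -> ~ split_by U s j.
Proof.
  intros HU Hall Hj Hs. pose proof (windows_period_ge6 U HU Hall).
  destruct (Z_le_gt_dec 3 j).
  - assert (Hle : gd (U s) (U (s + 3)%Z) <= 2)
      by (apply (split_gd_le2 U _ _ _ _ 0 3 Hs); [f_equal; lia|reflexivity|lia]).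
    rewrite Hall in Hle. lia.
  - assert (Hle : gd (U (s + 2)%Z) (U (s + 2 + 3)%Z) <= 2)
      by (apply (split_gd_le2 U _ _ _ _ 2 5 Hs); [reflexivity|f_equal; lia|lia]).
    rewrite Hall in Hle. lia.
Qed.

Lemma exists_gd3_window U a b : periodic_circuit U n -> 3 <= gd (U a) (U b) ->
  exists e, gd (U e) (U (e + 3)%Z) = 3.
Proof.
  intros HU Hab.
  destruct (periodic_rep U n HU a b) as [k [Hk Ek]].
  destruct (nat_discrete_ivt (fun t => gd (U a) (U (a + Z.of_nat t)%Z)) (Z.to_nat k) 3)
    as [t Ht]; cbv beta.
  - rewrite Z.add_0_r, gd_refl. lia.
  - intros t. rewrite Nat2Z.inj_succ, <- Z.add_1_r, Z.add_assoc.
    apply gd_le_S_r. circ_adj HU.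
  - now rewrite Z2Nat.id, <- Ek by lia.
  - destruct (gd3_offset3 U a _ HU Ht) as [E|E]; rewrite E in Ht.
    + eauto.
    + exists (a - 3)%Z. rewrite gd_sym. now replace (a - 3 + 3)%Z with a by lia.
Qed.

Lemma shortcut_split U : periodic_circuit U n -> forall d a b, gd (U a) (U b) = d ->
  (0 < b - a < n)%Z -> (Z.of_nat d < b - a)%Z -> (Z.of_nat d < n - (b - a))%Z ->
  exists s j, (2 <= j <= n - 2)%Z /\ split_by U s j.
Proof.
  intros HU d. induction d as [|d IHd]; intros a b Hd Hab H1 H2.
  - apply gd_eq0 in Hd. circ_neq HU Hd.
  - assert (Hne : U a <> U b) by (intros E; rewrite E, gd_refl in Hd; discriminate).
    destruct (gd_geodesic (U a) (U b)) as [R HR].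
    assert (Hrest : gd (R 1) (U b) = d).
    { rewrite <- (proj1 (proj2 HR)). rewrite (geodesic_slice_gd R (U a) (U b) 1 _ HR); lia. }
    destruct (geodesic_first_step U a b R HU Hne HR) as [[E|E]|Hsplit]; rewrite ?E in Hrest.
    + apply (IHd (a + 1)%Z b); lia.
    + apply (IHd (a - 1)%Z b); lia.
    + now exists a.
Qed.

Lemma periodic_circuit_diam_le2 U : periodic_circuit U n ->
  ((6 <= n)%Z -> exists a b, (0 < b - a < n)%Z /\ (Z.of_nat (gd (U a) (U b)) < b - a)%Z /\
                            (Z.of_nat (gd (U a) (U b)) < n - (b - a))%Z) ->
  forall a b, gd (U a) (U b) <= 2.
Proof.
  intros HU Hshortcut a b.
  destruct (le_lt_dec (gd (U a) (U b)) 2) as [|Hfar]; [assumption|exfalso].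
  destruct (exists_gd3_window U a b HU Hfar) as [e0 He0].
  pose proof (gd3_windows U e0 HU He0) as Hall.
  destruct (Hshortcut (windows_period_ge6 U HU Hall)) as [a' [b' [Hab [H1 H2]]]].
  destruct (shortcut_split U HU _ a' b' eq_refl Hab H1 H2) as [s [j [Hj Hs]]].
  exact (windows_no_split U s j HU Hall Hj Hs).
Qed.

End ShorterCircuits.

Definition periodize (u : nat -> V) (N : nat) (t : Z) : V := u (Z.to_nat (t mod Z.of_nat N)).

Section NatCircuit.
Variables (u : nat -> V) (N : nat).
Hypothesis Hu : embedded_circuit V adj u N.

Lemma circuit_arc_gd_le i j : i <= j <= N -> gd (u i) (u j) <= j - i.
Proof.
  intros Hij. apply (gd_le_walk (fun t => u (i + t))).
  split; [|split]; [f_equal; lia|f_equal; lia|].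
  intros t Ht. replace (i + S t) with (S (i + t)) by lia. apply Hu. lia.
Qed.

Lemma circuit_arc_gd_le_wrap i j : i <= j <= N -> gd (u i) (u j) <= N + i - j.
Proof.
  intros Hij. rewrite gd_sym.
  pose proof (gd_triangle (u j) (u N) (u i)). pose proof (circuit_arc_gd_le j N ltac:(lia)).
  pose proof (circuit_arc_gd_le 0 i ltac:(lia)). rewrite (proj1 (proj2 Hu)) in *. lia.
Qed.

Lemma periodize_at i : i <= N -> u i = periodize u N (Z.of_nat i).
Proof.
  intros Hi. unfold periodize. destruct (Nat.eq_dec i N) as [->|Hne].
  - rewrite Z_mod_same_full. exact (proj1 (proj2 Hu)).
  - rewrite Z.mod_small, Nat2Z.id by lia. reflexivity.
Qed.

Lemma periodize_circuit : 3 <= N -> periodic_circuit (periodize u N) (Z.of_nat N).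
Proof.
  intros HN. destruct Hu as [Hstep [Hclose Hinj]].
  assert (Hdm : forall t, t = (Z.of_nat N * (t / Z.of_nat N) + t mod Z.of_nat N)%Z /\
                          (0 <= t mod Z.of_nat N < Z.of_nat N)%Z).
  { intros t. split; [apply Z.div_mod|apply Z.mod_pos_bound]; lia. }
  split; [lia|split; [|split]].
  - intros t. unfold periodize. rewrite <- (Z.mul_1_l (Z.of_nat N)) at 1.
    now rewrite Z_mod_plus_full.
  - intros t. unfold periodize. destruct (Hdm t) as [Ht Hr].
    set (r := (t mod Z.of_nat N)%Z) in *. set (q := (t / Z.of_nat N)%Z) in *.
    destruct (Z_lt_le_dec (r + 1) (Z.of_nat N)).
    + rewrite <- (Z.mod_unique (t + 1) (Z.of_nat N) q (r + 1)) by lia.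
      replace (Z.to_nat (r + 1)) with (S (Z.to_nat r)) by lia. apply Hstep. lia.
    + rewrite <- (Z.mod_unique (t + 1) (Z.of_nat N) (q + 1) 0) by lia.
      change (Z.to_nat 0) with 0. rewrite <- Hclose. replace N with (S (Z.to_nat r)) by lia.
      apply Hstep. lia.
  - intros s t Hst E. unfold periodize in E.
    destruct (Hdm s) as [Hs Hrs], (Hdm t) as [Ht Hrt].
    apply Hinj in E; try lia.
    set (rs := (s mod Z.of_nat N)%Z) in *. set (rt := (t mod Z.of_nat N)%Z) in *.
    set (qs := (s / Z.of_nat N)%Z) in *. set (qt := (t / Z.of_nat N)%Z) in *.
    assert (qs = qt) by nia. nia.
Qed.

Lemma not_isometric_shortcut : ~ isometric_circuit V adj u N ->
  exists i j, i < j < N /\ gd (u i) (u j) < j - i /\ gd (u i) (u j) < N + i - j.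
Proof.
  intros Hni. apply NNPP. intros Hno. apply Hni. split; [exact Hu|].
  intros i j Hij HjN.
  replace (Nat.min (j - i) (N + i - j)) with (gd (u i) (u j)); [apply gd_spec|].
  pose proof (circuit_arc_gd_le i j ltac:(lia)).
  pose proof (circuit_arc_gd_le_wrap i j ltac:(lia)).
  destruct (le_lt_dec (j - i) (gd (u i) (u j))), (le_lt_dec (N + i - j) (gd (u i) (u j))); try lia.
  exfalso. apply Hno. exists i, j. lia.
Qed.

End NatCircuit.

Theorem geodetic_circuit_diam_le2 :
  (forall u N, isometric_circuit V adj u N -> N <= 5) ->
  forall u N, embedded_circuit V adj u N -> circuit_diam_le V adj u N 2.
Proof.
  intros Hiso u N. revert u. induction N as [N IHN] using (well_founded_induction lt_wf).
  intros u Hu i j k Hi Hj Hk. apply dist_gd in Hk as ->.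
  destruct (le_lt_dec N 2) as [HN|HN].
  - destruct (le_lt_dec i j).
    + pose proof (circuit_arc_gd_le u N Hu i j ltac:(lia)). lia.
    + rewrite gd_sym. pose proof (circuit_arc_gd_le u N Hu j i ltac:(lia)). lia.
  - rewrite (periodize_at u N Hu i Hi), (periodize_at u N Hu j Hj).
    apply (periodic_circuit_diam_le2 (Z.of_nat N)); [|now apply periodize_circuit|].
    + intros m w Hm. apply IHN. lia.
    + intros Hn6. destruct (not_isometric_shortcut u N Hu) as [i' [j' [Hij [H1 H2]]]].
      { intros Hi'. apply Hiso in Hi'. lia. }
      exists (Z.of_nat i'), (Z.of_nat j').
      rewrite <- (periodize_at u N Hu i'), <- (periodize_at u N Hu j') by lia. lia.
Qed.

End Geodetic.

Theorem theorem2 (V : Type) (adj : V -> V -> Prop) :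
  simple_graph V adj -> locally_finite V adj -> geodetic V adj ->
  (forall (u : nat -> V) (n : nat), isometric_circuit V adj u n -> n <= 5) ->
  forall (u : nat -> V) (n : nat), embedded_circuit V adj u n ->
    circuit_diam_le V adj u n 2.
Proof.
  intros Hsimple _ Hgeodetic Hiso.
  exact (geodetic_circuit_diam_le2 V adj Hsimple Hgeodetic Hiso).
Qed.
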